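(* Let $G$ be an oriented graph. A set $I\subseteq V(G)$ is an oriented independent set if and only if no two vertices of $I$ are adjacent and no two vertices of $I$ are connected by a directed $2$-path.
   Context: An oriented graph is a finite directed graph with no directed cycle of length 1 or 2. An oriented coloring of $G$ is a map $f$ from $V(G)$ to a set of colors such that (i) $f(x)\neq f(y)$ for every arc $xy$, and (ii) for all arcs $xy, zw$, $f(y)=f(z)$ implies $f(x)\neq f(w)$. A set $I\subseteq V(G)$ is an oriented independent set if for every two distinct $x,y\in I$ there is an oriented coloring $f$ of $G$ with $f(x)=f(y)$. Vertices $x,y$ are connected by a directed $2$-path if for some vertex $v$, $xv$ and $vy$ are arcs, or $yv$ and $vx$ are arcs. *)

From mathcomp Require Import all_boot.
Set Implicit Arguments. Unset Strict Implicit. Unset Printing Implicit Defensive.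

Definition oriented_graph (T : finType) (arc : rel T) : Prop :=
  (forall x, ~~ arc x x) /\ (forall x y, ~~ (arc x y && arc y x)).

Definition oriented_coloring (T : finType) (arc : rel T) (C : Type) (f : T -> C) : Prop :=
  (forall x y, arc x y -> f x <> f y) /\
  (forall x y z w, arc x y -> arc z w -> f y = f z -> f x <> f w).

Definition oriented_independent (T : finType) (arc : rel T) (I : {set T}) : Prop :=
  forall x y, x \in I -> y \in I -> x != y ->
    exists (C : Type) (f : T -> C), oriented_coloring arc f /\ f x = f y.

Definition adjacent (T : finType) (arc : rel T) (x y : T) : bool :=
  arc x y || arc y x.

Definition dipath2 (T : finType) (arc : rel T) (x y : T) : Prop :=
  exists v, (arc x v && arc v y) || (arc y v && arc v x).

From mathcomp Require Import all_boot.
Set Implicit Arguments. Unset Strict Implicit. Unset Printing Implicit Defensive.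

(* A coloring giving x and y the same color already separates them by an arc
   and by a directed 2-path, since conditions (i) and (ii) forbid exactly these.
   Conversely, if x and y are neither adjacent nor joined by a directed 2-path,
   the coloring that merges y into x and keeps every other vertex as its own
   color is oriented. *)

Lemma oriented_coloring_eq_separated (T : finType) (arc : rel T) (C : Type)
    (f : T -> C) (x y : T) :
  oriented_coloring arc f -> f x = f y ->
  ~~ adjacent arc x y /\ ~ dipath2 arc x y.
Proof.
move=> [col_arc col_path] fxy; split.
- apply/norP; split; apply/negP => a.
  + exact: col_arc a fxy.
  + exact: col_arc a (esym fxy).
- move=> [v /orP[/andP[a b] | /andP[a b]]].
  + exact: col_path a b erefl fxy.
  + exact: col_path a b erefl (esym fxy).
Qed.

Section Merge.

Variables (T : finType) (x y : T).

Definition merge (z : T) : T := if z == y then x else z.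

Lemma merge_eq (u v : T) :
  merge u = merge v -> [\/ u = v, u = x /\ v = y | u = y /\ v = x].
Proof.
rewrite /merge; case: (u =P y) => [-> | _]; case: (v =P y) => [-> | _] => merge_uv.
- by constructor 1.
- by constructor 3.
- by constructor 2.
- by constructor 1.
Qed.

Variable arc : rel T.
Hypotheses (arc_irr : forall z, ~~ arc z z)
           (arc_asym : forall u v, ~~ (arc u v && arc v u))
           (x_nadj_y : ~~ adjacent arc x y) (x_ndipath_y : ~ dipath2 arc x y).

Lemma merge_oriented_coloring : oriented_coloring arc merge.
Proof.
have irr z : arc z z -> False by move=> a; move: (arc_irr z); rewrite a.
have asym u v : arc u v -> arc v u -> False
  by move=> a b; move: (arc_asym u v); rewrite a b.
have [nxy nyx] : (arc x y -> False) /\ (arc y x -> False).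
  by move: x_nadj_y; rewrite /adjacent negb_or => /andP[/negP ? /negP ?].
have path_xy v : arc x v -> arc v y -> False
  by move=> a b; apply: x_ndipath_y; exists v; rewrite a b.
have path_yx v : arc y v -> arc v x -> False
  by move=> a b; apply: x_ndipath_y; exists v; rewrite a b orbT.
split.
- by move=> a b ab /merge_eq[eq_ab | [eq_ax eq_by] | [eq_ay eq_bx]]; subst; eauto.
(* In each case the arcs ab and cd form a loop, a 2-cycle, an arc between x
   and y, or a directed 2-path between them. *)
- move=> a b c d ab cd /merge_eq[eq_bc | [eq_bx eq_cy] | [eq_by eq_cx]]
    /merge_eq[eq_ad | [eq_ax eq_dy] | [eq_ay eq_dx]]; subst; eauto.
Qed.

End Merge.

Theorem proposition3 (T : finType) (arc : rel T) (I : {set T}) :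
  oriented_graph arc ->
  (oriented_independent arc I <->
   (forall x y, x \in I -> y \in I -> x != y ->
      ~~ adjacent arc x y /\ ~ dipath2 arc x y)).
Proof.
move=> [irr asym]; split=> [indep | sep] x y xI yI xy.
- have [C [f [col fxy]]] := indep x y xI yI xy.
  exact: oriented_coloring_eq_separated col fxy.
- have [nadj ndipath] := sep x y xI yI xy.
  exists T, (merge x y); split; first exact: merge_oriented_coloring.
  by rewrite /merge eqxx (negbTE xy).
Qed.
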